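(* Let $\mathbb{X}$ be a real Banach space such that $\operatorname{Sm}\mathbb{X}$ is a dense $G_\delta$ subset of $\mathbb{X}$, and let $U\subseteq\mathbb{X}$ be dense in $\mathbb{X}$. If a bounded linear operator $T:\mathbb{X}\to\mathbb{X}$ preserves Birkhoff–James orthogonality at each point of $U$, then $T$ is a scalar multiple of an isometry (there is $\lambda\ge0$ with $\|Tx\|=\lambda\|x\|$ for all $x$).
   Context: $u\perp_B v$ means $\|u+\lambda v\|\ge\|u\|$ for all real $\lambda$. $T$ preserves Birkhoff–James orthogonality at $x$ if $x\perp_B v$ implies $Tx\perp_B Tv$ for all $v$. For non-zero $z$, $J(z)=\{f\in\mathbb{X}^*:\|f\|=1,\ f(z)=\|z\|\}$; $z$ is smooth if $J(z)$ is a singleton; $\operatorname{Sm}\mathbb{X}$ is the set of smooth points. *)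

From HB Require Import structures.
From mathcomp Require Import all_boot all_order all_algebra.
From mathcomp Require Import all_classical all_reals all_analysis.
Set Implicit Arguments. Unset Strict Implicit. Unset Printing Implicit Defensive.
Import Order.TTheory GRing.Theory Num.Theory.
Import numFieldNormedType.Exports.
Local Open Scope classical_set_scope.
Local Open Scope ring_scope.

Definition BJorth (R : realType) (X : normedModType R) (u v : X) : Prop :=
  forall l : R, `|u| <= `|u + l *: v|.

Definition preserves_BJ_at (R : realType) (X : normedModType R)
  (T : X -> X) (x : X) : Prop :=
  forall v : X, BJorth x v -> BJorth (T x) (T v).

Definition is_dual_elt (R : realType) (X : normedModType R) (f : X -> R) : Prop :=
  [/\ (forall x y : X, f (x + y) = f x + f y),
      (forall (a : R) (x : X), f (a *: x) = a * f x) &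
      continuous f].

Definition dual_norm (R : realType) (X : normedModType R) (f : X -> R) : R :=
  sup [set `|f y| | y in [set y : X | `|y| <= 1]].

Definition Jset (R : realType) (X : normedModType R) (z : X) : set (X -> R) :=
  [set f | is_dual_elt f /\ dual_norm f = 1 /\ f z = `|z|].

Definition smooth_point (R : realType) (X : normedModType R) (z : X) : Prop :=
  z != 0 /\ exists f : X -> R, Jset z = [set f].

Definition Sm (R : realType) (X : normedModType R) : set X :=
  [set z | smooth_point z].

Definition G_delta (T : topologicalType) (S : set T) : Prop :=
  exists F : nat -> set T, (forall n, open (F n)) /\ S = \bigcap_n F n.

From HB Require Import structures.
From mathcomp Require Import all_boot all_order all_algebra.
From mathcomp Require Import all_classical all_reals all_analysis.
From mathcomp Require Import ring lra.
Import Order.TTheory GRing.Theory Num.Theory.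
Import numFieldNormedType.Exports.
Local Open Scope classical_set_scope.
Local Open Scope ring_scope.
Set Implicit Arguments. Unset Strict Implicit. Unset Printing Implicit Defensive.

(* Let p be a subgradient at 0 of s |-> |u + s d|. Then d - (p/|u|) u is
   Birkhoff-James orthogonal to u, so if T preserves orthogonality at u the
   line s |-> (|Tu|/|u|) (|u| + s p) lies below s |-> |T (u + s d)|.  Such a
   common subgradient exists at the points of U, hence, by density and
   compactness of the bounded set of subgradients, at every point.
   Let |Tz| <= K |z|.  Along a segment staying at distance >= m from 0,
   comparing the two inequalities at the ends of a step of length h bounds the
   change of the stretch |Tz|/|z| by (K/m) h (p(s) - p(t)); the subgradients
   increase along the segment, so over a subdivision into N steps the changes
   add up to at most (K/m) (p(1) - p(0)) / N.  The stretch is therefore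
   constant on such segments, and then on all nonzero vectors. *)

(* [rt], [rs] are the stretches at two points of a segment, at distances [gt],
   [gs] from the origin, with subgradients [pt], [ps] there and step [h]. *)
Lemma ratio_increment_le (R : realFieldType) (gt gs rt rs h pt ps K m : R) :
  0 < m -> m <= gt -> m <= gs -> 0 <= rt <= K -> 0 <= rs <= K ->
  gt + h * pt <= gs -> gs - h * ps <= gt ->
  rt * (gt + h * pt) <= rs * gs -> rs * (gs - h * ps) <= rt * gt ->
  `|rs - rt| <= K / m * h * (ps - pt).
Proof.
move=> m0 mgt mgs /andP[rt0 rtK] /andP[rs0 rsK] Sl Sr Nl Nr.
have hp : 0 <= h * (ps - pt) by lra.
have up : (rs - rt) * gt <= K * (h * (ps - pt)).
  have : rs * (gt - gs + h * ps) <= rs * (h * (ps - pt)) by rewrite ler_wpM2l //; lra.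
  have : rs * (h * (ps - pt)) <= K * (h * (ps - pt)) by rewrite ler_wpM2r.
  nra.
have down : (rt - rs) * gs <= K * (h * (ps - pt)).
  have : rt * (gs - gt - h * pt) <= rt * (h * (ps - pt)) by rewrite ler_wpM2l //; lra.
  have : rt * (h * (ps - pt)) <= K * (h * (ps - pt)) by rewrite ler_wpM2r.
  nra.
have gm t : m <= t -> K * (h * (ps - pt)) <= K / m * h * (ps - pt) * t.
  move=> mt; have -> : K / m * h * (ps - pt) * t = K * (h * (ps - pt)) * (t / m) by ring.
  by rewrite ler_peMr ?(mulr_ge0 (le_trans rt0 rtK)) // ler_pdivlMr // mul1r.
have gt0 : 0 < gt by lra.
have gs0 : 0 < gs by lra.
rewrite ler_norml; apply/andP; split.
- rewrite lerNl opprB -(ler_pM2r gs0); exact: le_trans down (gm _ mgs).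
- rewrite -(ler_pM2r gt0); exact: le_trans up (gm _ mgt).
Qed.

Lemma endpoints_eq_of_increment_bound (R : realType) (f phi : R -> R) (C : R) :
  (forall t s, 0 <= t -> t < s -> s <= 1 ->
     `|f s - f t| <= C * (s - t) * (phi s - phi t)) ->
  f 1 = f 0.
Proof.
move=> incr.
have grid n : `|f 1 - f 0| <= C * (phi 1 - phi 0) * harmonic n.
  pose N : R := n.+1%:R; pose tk (k : nat) := k%:R / N.
  have N0 : 0 < N by rewrite ltr0n.
  suff telescope k : (k <= n.+1)%N ->
      `|f (tk k) - f 0| <= C * (phi (tk k) - phi 0) / N.
    by have := telescope _ (leqnn _); rewrite /tk divff ?gt_eqF.
  elim: k => [_|k ih kn]; first by rewrite /tk mul0r !subrr normr0 mulr0 mul0r.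
  have step : tk k.+1 - tk k = N^-1 by rewrite /tk -mulrBl -natrB // subSnn mul1r.
  have hk : `|f (tk k.+1) - f (tk k)| <= C * N^-1 * (phi (tk k.+1) - phi (tk k)).
    rewrite -step; apply: incr; first by rewrite divr_ge0 ?ler0n ?ltW.
      by rewrite -subr_gt0 step invr_gt0.
    by rewrite ler_pdivrMr // mul1r ler_nat.
  apply: le_trans (ler_distD (f (tk k)) _ _) _.
  apply: le_trans (lerD hk (ih (ltnW kn))) _.
  by rewrite le_eqVlt; apply/orP; left; apply/eqP; ring.
have : `|f 1 - f 0| <= C * (phi 1 - phi 0) * 0.
  apply: (ler_cvg_to (cvg_cst _) (cvgM (cvg_cst _) cvg_harmonic)).
  exact: nearW.
by rewrite mulr0 normr_le0 subr_eq0 => /eqP.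
Qed.

Lemma increasing_seq_geq (f : nat -> nat) : increasing_seq f -> forall n, (n <= f n)%N.
Proof.
move=> /increasing_seqP f_incr; elim=> // n ih.
exact: leq_ltn_trans ih (f_incr n).
Qed.

Section HarmonicApproximation.
Variables (R : realType) (X : normedModType R).

Lemma dense_harmonic_approx (U : set X) (x : X) : dense U ->
  exists u : nat -> X, forall n, U (u n) /\ `|x - u n| < harmonic n.
Proof.
move=> dU; suff /choice[u hu] : forall n, exists y, U y /\ `|x - y| < harmonic n.
  by exists u.
move=> n.
have [y [xy Uy]] := dU (ball x (harmonic n)) (ex_intro _ x (ballxx x (harmonic_gt0 n))) (ball_open _ _).
by exists y; split => //; move: xy; rewrite -ball_normE.
Qed.

Lemma cvg_harmonic_dist (u : nat -> X) (x : X) :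
  (forall n, `|x - u n| < harmonic n) -> u @ \oo --> x.
Proof.
move=> ux; apply/cvgrPdist_lt => e e0.
near=> n; apply: lt_trans (ux n) _; near: n.
have /cvgrPdist_lt/(_ e e0) := @cvg_harmonic R.
by apply: filterS => n; rewrite sub0r normrN ger0_norm // harmonic_ge0.
Unshelve. all: by end_near.
Qed.

End HarmonicApproximation.

Section NormSubgradient.
Variables (R : realType) (X : normedModType R).
Implicit Types (x d : X) (p : R).

Definition norm_subgrad x d p := forall s : R, `|x| + s * p <= `|x + s *: d|.

Lemma norm_slope_le x d (s t : R) : s < 0 -> 0 < t ->
  (`|x + s *: d| - `|x|) / s <= (`|x + t *: d| - `|x|) / t.
Proof.
move=> s0 t0.
have convex : (t - s) * `|x| <= t * `|x + s *: d| - s * `|x + t *: d|.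
  have -> : (t - s) * `|x| = `|t *: (x + s *: d) - s *: (x + t *: d)|.
    rewrite !scalerDr !scalerA (mulrC t s) opprD addrA addrAC addrK -scalerBl.
    by rewrite normrZ ger0_norm // subr_ge0 ltW // (lt_trans s0).
  rewrite (le_trans (ler_normB _ _)) // !normrZ gtr0_norm // ltr0_norm //.
  by rewrite mulNr.
rewrite ler_ndivrMr // mulrAC ler_pdivrMr //; nra.
Qed.

Lemma norm_subgrad_exists x d : exists p, norm_subgrad x d p.
Proof.
pose slope (s : R) := (`|x + s *: d| - `|x|) / s.
pose E := [set slope s | s in [set s : R | s < 0]].
have E0 : E (slope (-1)) by exists (-1) => //=; rewrite ltrN10.
have ubE : ubound E (slope 1) by move=> _ [s /= s0 <-]; apply: norm_slope_le.
exists (sup E) => s; have [s0|s0|->] := ltgtP s 0.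
- have : slope s <= sup E by apply: ub_le_sup; [exists (slope 1) | exists s].
  rewrite /slope ler_ndivrMr //; lra.
- have : sup E <= slope s.
    by apply: ge_sup; [exists (slope (-1)) | move=> _ [t /= t0 <-]; apply: norm_slope_le].
  rewrite /slope ler_pdivlMr //; lra.
- by rewrite mul0r addr0 scale0r addr0.
Qed.

Lemma norm_subgrad_le x d p : norm_subgrad x d p -> `|p| <= `|d|.
Proof.
move=> sub; have := sub 1; have := sub (-1).
rewrite mul1r mulN1r scale1r scaleN1r.
have := ler_normD x d; have := ler_normB x d.
rewrite ler_norml; lra.
Qed.

Lemma norm_subgrad_scale x d p : norm_subgrad x d p ->
  forall a l : R, a * `|x| + l * p <= `|a *: x + l *: d|.
Proof.
move=> sub a l; have [a0|a0] := lerP a 0.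
- have lp : l * p <= `|l *: d|.
    rewrite normrZ (le_trans (ler_norm _)) // normrM ler_wpM2l //.
    exact: norm_subgrad_le.
  have := lerB_normD (l *: d) (a *: x).
  rewrite (addrC (l *: d)) (normrZ a) ler0_norm //; lra.
- have -> : a *: x + l *: d = a *: (x + (l / a) *: d).
    by rewrite scalerDr scalerA mulrC divfK ?gt_eqF.
  rewrite normrZ gtr0_norm //.
  have e : a * (l / a) = l by rewrite mulrC divfK ?gt_eqF.
  by have := ler_wpM2l (ltW a0) (sub (l / a)); rewrite mulrDr mulrA e.
Qed.

Lemma norm_subgrad_BJorth x d p : x != 0 -> norm_subgrad x d p ->
  BJorth x (d - (p / `|x|) *: x).
Proof.
move=> x0 sub l.
have -> : x + l *: (d - (p / `|x|) *: x) = (1 - l * (p / `|x|)) *: x + l *: d.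
  by rewrite scalerBr scalerA scalerBl scale1r addrA addrAC.
apply: le_trans (norm_subgrad_scale sub _ _).
by rewrite le_eqVlt; apply/orP; left; apply/eqP; field; rewrite normr_eq0.
Qed.

End NormSubgradient.

Section Stretch.
Variables (R : realType) (X : normedModType R) (T : {linear X -> X}).
Implicit Types (x d : X) (p : R).

(* At [x = 0] the division returns the junk value [0]. *)
Definition stretch x := `|T x| / `|x|.

Lemma normT_stretch x : `|T x| = stretch x * `|x|.
Proof.
have [->|x0] := eqVneq x 0; first by rewrite linear0 !normr0 mulr0.
by rewrite /stretch divfK ?normr_eq0.
Qed.

Lemma stretchZ (k : R) x : k != 0 -> stretch (k *: x) = stretch x.
Proof.
move=> k0; have [->|x0] := eqVneq x 0; first by rewrite scaler0.
rewrite /stretch linearZ /= !normrZ.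
by field; rewrite ?normr_eq0 ?x0 ?k0.
Qed.

Definition common_subgrad x d p := norm_subgrad x d p /\
  forall s : R, `|T x| * (`|x| + s * p) <= `|T (x + s *: d)| * `|x|.

Lemma preserves_BJ_common_subgrad u d p :
  preserves_BJ_at T u -> norm_subgrad u d p -> common_subgrad u d p.
Proof.
move=> pres sub; split=> // s.
have [->|u0] := eqVneq u 0; first by rewrite linear0 !normr0 mul0r mulr_ge0.
have u_gt0 : 0 < `|u| by rewrite normr_gt0.
set b := `|u| + s * p.
have [b_le0|b_gt0] := lerP b 0.
  by apply: le_trans (mulr_ge0 (normr_ge0 _) (normr_ge0 _)); rewrite mulr_ge0_le0.
pose w := d - (p / `|u|) *: u; pose l := s * `|u| / b.
have Tw_orth := pres w (norm_subgrad_BJorth u0 sub).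
have -> : u + s *: d = (b / `|u|) *: (u + l *: w).
  rewrite /w scalerBr scalerA addrCA -[u in u - _]scale1r -scalerBl scalerDr !scalerA.
  rewrite [RHS]addrC -[u in LHS]scale1r.
  by congr (_ *: _ + _ *: _); rewrite /l /b; field; rewrite (gt_eqF u_gt0) (gt_eqF b_gt0).
rewrite linearZ linearD linearZ /= normrZ gtr0_norm ?divr_gt0 //.
by rewrite mulrAC divfK ?gt_eqF // mulrC ler_wpM2l ?(ltW b_gt0).
Qed.

Lemma common_subgrad_cvg (v : nat -> X) (q : nat -> R) x d (c : R) :
  continuous T -> v @ \oo --> x -> q @ \oo --> c ->
  (forall n, common_subgrad (v n) d (q n)) -> common_subgrad x d c.
Proof.
move=> cT vx qc sub.
have vsd s : (fun n => v n + s *: d) @ \oo --> x + s *: d.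
  exact: cvgD vx (cvg_cst _).
have lhs_cvg s : (fun n => `|v n| + s * q n) @ \oo --> `|x| + s * c.
  exact: cvgD (cvg_norm vx) (cvgM (cvg_cst _) qc).
split=> s.
- apply: ler_cvg_to (lhs_cvg s) (cvg_norm (vsd s)) _.
  exact: nearW (fun n => (sub n).1 s).
- apply: ler_cvg_to (cvgM (cvg_norm (cvg_comp _ _ vx (cT _))) (lhs_cvg s))
    (cvgM (cvg_norm (cvg_comp _ _ (vsd s) (cT _))) (cvg_norm vx)) _.
  exact: nearW (fun n => (sub n).2 s).
Qed.

Lemma common_subgrad_exists (U : set X) x d : dense U -> continuous T ->
  (forall u, U u -> preserves_BJ_at T u) -> exists p, common_subgrad x d p.
Proof.
move=> dU cT pres.
have [u hu] := dense_harmonic_approx x dU.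
have /choice[phi hphi] : forall n, exists p, common_subgrad (u n) d p.
  move=> n; have [p sub] := norm_subgrad_exists (u n) d.
  by exists p; apply: preserves_BJ_common_subgrad (pres _ (hu n).1) sub.
have phi_bnd : bounded_fun phi.
  rewrite /bounded_near; near=> M => n _ /=; apply: le_trans (norm_subgrad_le (hphi n).1) _.
  by near: M; apply: nbhs_pinfty_ge; rewrite num_real.
have [f f_incr /cvg_ex [c phic]] := bolzano_weierstrass phi_bnd.
exists c; apply: (common_subgrad_cvg cT _ phic) => [|n]; last exact: hphi.
apply: cvg_harmonic_dist => n; apply: lt_le_trans (hu (f n)).2 _.
by rewrite lef_pV2 ?posrE // ler_nat ltnS increasing_seq_geq.
Unshelve. all: by end_near.
Qed.

Lemma stretch_subgrad x d p (s : R) : x != 0 -> common_subgrad x d p ->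
  stretch x * (`|x| + s * p) <= stretch (x + s *: d) * `|x + s *: d|.
Proof.
move=> x0 [_ /(_ s)]; have x_gt0 : 0 < `|x| by rewrite normr_gt0.
by rewrite !normT_stretch mulrAC ler_pM2r.
Qed.

Lemma stretch_segment (a d : X) (m K : R) : 0 < m ->
  (forall t : R, 0 <= t <= 1 -> m <= `|a + t *: d|) ->
  (forall z, `|T z| <= K * `|z|) ->
  (forall z, exists p, common_subgrad z d p) ->
  stretch (a + d) = stretch a.
Proof.
move=> m0 away bnd sub.
have /choice[phi hphi] : forall t : R, exists p, common_subgrad (a + t *: d) d p.
  by move=> t; apply: sub.
have := @endpoints_eq_of_increment_bound _ (fun t => stretch (a + t *: d)) phi (K / m).
rewrite scale1r scale0r addr0; apply=> t s t0 ts s1.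
have [mt ms] : m <= `|a + t *: d| /\ m <= `|a + s *: d|.
  by split; apply: away; rewrite ?t0 ?(ltW ts) ?(le_trans (ltW ts)) ?(le_trans t0 (ltW ts)).
have nz r : m <= `|a + r *: d| -> a + r *: d != 0.
  by move=> mr; rewrite -normr_eq0 gt_eqF // (lt_le_trans m0).
have stretch_bnd r : m <= `|a + r *: d| -> 0 <= stretch (a + r *: d) <= K.
  by move=> mr; rewrite divr_ge0 //= ler_pdivrMr ?(lt_le_trans m0).
have shift r h : a + r *: d + h *: d = a + (r + h) *: d by rewrite -addrA -scalerDl.
have fwd := stretch_subgrad (s - t) (nz _ mt) (hphi t).
have bwd := stretch_subgrad (- (s - t)) (nz _ ms) (hphi s).
rewrite shift subrKC in fwd.
rewrite shift mulNr opprB subrKC in bwd.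
have sub_fwd := (hphi t).1 (s - t); have sub_bwd := (hphi s).1 (- (s - t)).
rewrite shift subrKC in sub_fwd.
rewrite shift mulNr opprB subrKC in sub_bwd.
exact: ratio_increment_le m0 mt ms (stretch_bnd _ mt) (stretch_bnd _ ms) sub_fwd sub_bwd fwd bwd.
Qed.

Lemma stretch_const (K : R) : (forall z, `|T z| <= K * `|z|) ->
  (forall z d, exists p, common_subgrad z d p) ->
  forall a b, a != 0 -> b != 0 -> stretch b = stretch a.
Proof.
move=> bnd sub a b a0 b0.
pose f (t : R) := `|a + t *: (b - a)|.
have f_cont : continuous f.
  move=> t; apply: cvg_norm; apply: cvgD (cvg_cst _) _.
  exact: cvgZ cvg_id (cvg_cst _).
have [|c c01 fc_min] := @EVT_min R f 0 1 ler01; first exact: continuous_subspaceT.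
have [fc_gt0|fc_le0] := ltrP 0 (f c).
  rewrite -[b](subrKC a); apply: stretch_segment fc_gt0 _ bnd (sub ^~ _) => t t01.
  by apply: fc_min; rewrite in_itv.
have c_root : a + c *: (b - a) = 0.
  by apply/eqP; rewrite -normr_eq0 eq_le normr_ge0 andbT.
have c0 : c != 0.
  by apply: contraNneq a0 => c0; move: c_root; rewrite c0 scale0r addr0 => ->.
have b_mul : b = ((c - 1) / c) *: a.
  apply: (scalerI c0); rewrite scalerA mulrC divfK // scalerBl scale1r.
  by move/eqP: c_root; rewrite scalerBr addrCA addr_eq0 opprB => /eqP.
rewrite b_mul stretchZ //; apply: contraNneq b0 => k0.
by rewrite b_mul k0 scale0r.
Qed.

End Stretch.

Theorem mainTheorem7 (R : realType) (X : completeNormedModType R)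
  (U : set X) (T : {linear X -> X}) :
  dense (@Sm R X) -> G_delta (@Sm R X) ->
  dense U ->
  continuous T ->
  (forall x, U x -> preserves_BJ_at T x) ->
  exists lam : R, 0 <= lam /\ forall x : X, `|T x| = lam * `|x|.
Proof.
move=> _ _ dU cT pres.
have [K _ bnd] : exists2 K : R, 0 < K & forall z, `|T z| <= K * `|z|.
  by have /linear_boundedP/pinfty_ex_gt0 := continuous_linear_bounded 0 (cT 0).
have sub z d := common_subgrad_exists z d dU cT pres.
have [[e e0]|trivial] := pselect (exists e : X, e != 0).
  exists (stretch T e); split; first by rewrite divr_ge0.
  move=> x; rewrite normT_stretch; have [->|x0] := eqVneq x 0.
    by rewrite !normr0 !mulr0.
  by rewrite (stretch_const bnd sub e0 x0).
exists 0; split=> // x; have [->|x0] := eqVneq x 0.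
  by rewrite linear0 normr0 mul0r.
by case: trivial; exists x.
Qed.
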